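(* For any $n\geq 1$ and any group $\mathsf{G}$, there is a strict isomorphism of 2-groups $\mathsf{S}_n\wr\wr\ \mathbb{S}ym(\mathsf{G})\to\mathbb{S}ym\big(\coprod^n\mathsf{G}\big)$, where $\coprod^n\mathsf G$ is the coproduct of $n$ copies of the one-object groupoid $\mathsf G$. Explicitly, writing the objects of $\coprod^n\mathsf G$ as $\ast_1,\dots,\ast_n$, it sends an object $(\sigma,(\phi_1,\dots,\phi_n))$ ($\sigma\in\mathsf S_n$, $\phi_i\in\mathrm{Aut}(\mathsf G)$) to the self-equivalence $(g,\ast_i)\mapsto(\phi_i(g),\ast_{\sigma(i)})$ and a morphism given by $(g_1,\dots,g_n)$ to the natural isomorphism with components $(g_i,\ast_{\sigma(i)})$.
   Context: A 2-group is a monoidal groupoid in which every object has a weak tensor inverse; a strict isomorphism of 2-groups is an isomorphism of the underlying groupoids strictly preserving the tensor product and unit. For a groupoid $\mathcal K$, $\mathbb{S}ym(\mathcal K)$ is the 2-group of self-equivalences of $\mathcal K$ and natural isomorphisms, with tensor given by composition. For a group $\mathsf G$ (one-object groupoid), $\mathbb{S}ym(\mathsf G)$ is (isomorphic to) the strict 2-group with objects the automorphisms $\phi$ of $\mathsf G$, morphisms $\phi\to\tilde\phi$ the elements $g\in\mathsf G$ with $\tilde\phi=c_g\circ\phi$ ($c_g$ conjugation by $g$), composition $\tilde g\circ g=\tilde g g$, tensor $\phi\otimes\phi'=\phi\circ\phi'$ and $g\otimes g'=g\,\phi(g')$ for $g:\phi\to\tilde\phi$, $g':\phi'\to\tilde\phi'$.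 For a 2-group $\mathbb G$, $\mathsf{S}_n\wr\wr\ \mathbb{G}$ is the 2-group with objects $(\sigma,\mathbf x)$, $\sigma\in\mathsf S_n$, $\mathbf x$ an $n$-tuple of objects of $\mathbb G$; morphisms $(\sigma,\mathbf x)\to(\sigma,\mathbf x')$ are $n$-tuples of morphisms $x_i\to x'_i$ (none if the permutations differ); tensor $(\sigma,\mathbf{x})\otimes(\sigma',\mathbf{x}')=(\sigma\sigma',(\mathbf{x}\rhd\sigma')\otimes\mathbf{x}')$ and analogously on morphisms, with $\mathbf{x}\rhd\sigma=(x_{\sigma(1)},\dots,x_{\sigma(n)})$ and componentwise $\otimes$; unit $(id,(e,\dots,e))$; associator and unitors induced componentwise from those of $\mathbb G$ (trivial when $\mathbb G$ is strict). *)

From mathcomp Require Import all_boot all_fingroup.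
Set Implicit Arguments. Unset Strict Implicit. Unset Printing Implicit Defensive.

Record grp := Grp {
  gcar :> Type;
  gmul : gcar -> gcar -> gcar;
  gone : gcar;
  ginv : gcar -> gcar;
  gmulA : forall x y z, gmul x (gmul y z) = gmul (gmul x y) z;
  gmul1g : forall x, gmul gone x = x;
  gmulVg : forall x, gmul (ginv x) x = gone }.

Definition is_aut (G : grp) (phi : G -> G) : Prop :=
  (forall x y, phi (gmul x y) = gmul (phi x) (phi y)) /\ bijective phi.

Definition conjg (G : grp) (g x : G) : G := gmul (gmul g x) (ginv g).

(* gcomp g f = g o f  (f first), meaningful when gtgt f = gsrc g.      *)
Record gpd := Gpd {
  gob : Type;
  gmo : Type;
  gsrc : gmo -> gob;
  gtgt : gmo -> gob;
  gidm : gob -> gmo;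
  gcomp : gmo -> gmo -> gmo }.

(* The coproduct of n copies of the one-object groupoid G:             *)
(* objects *_1..*_n (i.e. 'I_n), morphisms (g, *_i) : *_i -> *_i,      *)
Definition coprodG (n : nat) (G : grp) : gpd :=
  @Gpd 'I_n (gcar G * 'I_n)%type snd snd (fun i => (gone G, i))
       (fun g f => (gmul g.1 f.1, f.2)).

Record fdata (K : gpd) := FData { fo : gob K -> gob K; fm : gmo K -> gmo K }.

Definition is_functor (K : gpd) (F : fdata K) : Prop :=
  [/\ (forall f, gsrc (fm F f) = fo F (gsrc f)),
      (forall f, gtgt (fm F f) = fo F (gtgt f)),
      (forall x, fm F (gidm x) = gidm (fo F x)) &
      (forall f g, gtgt f = gsrc g -> fm F (gcomp g f) = gcomp (fm F g) (fm F f))].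

Definition fcomp (K : gpd) (F F' : fdata K) : fdata K :=
  FData (fun x => fo F (fo F' x)) (fun f => fm F (fm F' f)).
Definition fid (K : gpd) : fdata K := FData id id.

Definition is_nat (K : gpd) (F F' : fdata K) (eta : gob K -> gmo K) : Prop :=
  (forall x, gsrc (eta x) = fo F x /\ gtgt (eta x) = fo F' x) /\
  (forall f, gcomp (fm F' f) (eta (gsrc f)) = gcomp (eta (gtgt f)) (fm F f)).

Definition is_equiv (K : gpd) (F : fdata K) : Prop :=
  exists F' : fdata K, is_functor F' /\
    exists eta eps, is_nat (fid K) (fcomp F' F) eta /\ is_nat (fcomp F F') (fid K) eps.

(* Data of a (strict) 2-group: a groupoid whose objects/morphisms are  *)
(* the elements of tob/tmo satisfying tob_ok/tmo_ok, with tensor and   *)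
(* unit.  (Associators/unitors are identities for the 2-groups below.) *)
Record tg := TG {
  tob : Type;
  tmo : Type;
  tob_ok : tob -> Prop;
  tmo_ok : tmo -> Prop;
  tsrc : tmo -> tob;
  ttgt : tmo -> tob;
  tidm : tob -> tmo;
  tcomp : tmo -> tmo -> tmo;          (* tcomp b a = b o a *)
  ttens_ob : tob -> tob -> tob;
  ttens_mo : tmo -> tmo -> tmo;
  tunit : tob }.

Record ntr (K : gpd) := NTr { nsrc : fdata K; ntgt : fdata K; ncomp : gob K -> gmo K }.

Definition sym_ob_ok (K : gpd) (F : fdata K) := is_functor F /\ is_equiv F.

Definition Symm (K : gpd) : tg :=
  @TG (fdata K) (ntr K)
    (@sym_ob_ok K)
    (fun a => [/\ sym_ob_ok (nsrc a), sym_ob_ok (ntgt a) & is_nat (nsrc a) (ntgt a) (ncomp a)])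
    (@nsrc K) (@ntgt K)
    (fun F => NTr F F (fun x => gidm (fo F x)))
    (fun b a => NTr (nsrc a) (ntgt b) (fun x => gcomp (ncomp b x) (ncomp a x)))
    (@fcomp K)
    (fun a a' => NTr (fcomp (nsrc a) (nsrc a')) (fcomp (ntgt a) (ntgt a'))
                     (fun x => gcomp (ncomp a (fo (ntgt a') x)) (fm (nsrc a) (ncomp a' x))))
    (fid K).

(* S_n wr wr Sym(G), with Sym(G) in its explicit strict model.         *)
(* Permutations compose as functions: sigma sigma' = sigma o sigma',   *)
(* which in MathComp's (diagrammatic) {perm} product is sigma' * sigma.*)
Record wob (n : nat) (G : grp) := WOb { wperm : 'S_n; waut : 'I_n -> G -> G }.
Record wmo (n : nat) (G : grp) := WMo { wsrc : wob n G; wtgt : wob n G; wel : 'I_n -> G }.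

Definition wob_ok n G (x : wob n G) := forall i, is_aut (waut x i).

Definition wreath (n : nat) (G : grp) : tg :=
  @TG (wob n G) (wmo n G)
    (@wob_ok n G)
    (fun a => [/\ wob_ok (wsrc a), wob_ok (wtgt a), wperm (wsrc a) = wperm (wtgt a) &
                 forall i, waut (wtgt a) i = (fun x => conjg (wel a i) (waut (wsrc a) i x))])
    (@wsrc n G) (@wtgt n G)
    (fun x => WMo x x (fun _ => gone G))
    (fun b a => WMo (wsrc a) (wtgt b) (fun i => gmul (wel b i) (wel a i)))
    (fun x x' => WOb (wperm x' * wperm x)%g
                     (fun i g => waut x (wperm x' i) (waut x' i g)))
    (fun a a' =>
       let tens x x' := WOb (wperm x' * wperm x)%g
                     (fun i g => waut x (wperm x' i) (waut x' i g)) in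
       WMo (tens (wsrc a) (wsrc a')) (tens (wtgt a) (wtgt a'))
           (fun i => gmul (wel a (wperm (wsrc a') i))
                          (waut (wsrc a) (wperm (wsrc a') i) (wel a' i))))
    (WOb 1%g (fun _ g => g)).

Definition is_strict_iso (A B : tg) (Fo : tob A -> tob B) (Fm : tmo A -> tmo B) : Prop :=
  (forall x, tob_ok x -> tob_ok (Fo x)) /\
  (forall f, tmo_ok f -> tmo_ok (Fm f)) /\
  (forall f, tmo_ok f -> tsrc (Fm f) = Fo (tsrc f) /\ ttgt (Fm f) = Fo (ttgt f)) /\
  (forall x, tob_ok x -> Fm (tidm x) = tidm (Fo x)) /\
  (forall f g, tmo_ok f -> tmo_ok g -> ttgt f = tsrc g ->
               Fm (tcomp g f) = tcomp (Fm g) (Fm f)) /\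
  (forall x y, tob_ok x -> tob_ok y -> Fo x = Fo y -> x = y) /\
  (forall y, tob_ok y -> exists2 x, tob_ok x & Fo x = y) /\
  (forall f g, tmo_ok f -> tmo_ok g -> Fm f = Fm g -> f = g) /\
  (forall g, tmo_ok g -> exists2 f, tmo_ok f & Fm f = g) /\
  (forall x y, tob_ok x -> tob_ok y -> Fo (ttens_ob x y) = ttens_ob (Fo x) (Fo y)) /\
  (forall f g, tmo_ok f -> tmo_ok g -> Fm (ttens_mo f g) = ttens_mo (Fm f) (Fm g)) /\
  Fo (tunit A) = tunit B.

Definition Phi_ob (n : nat) (G : grp) (x : wob n G) : fdata (coprodG n G) :=
  @FData (coprodG n G) (fun i => wperm x i) (fun f => (waut x f.2 f.1, wperm x f.2)).

Definition Phi_mo (n : nat) (G : grp) (a : wmo n G) : ntr (coprodG n G) :=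
  @NTr (coprodG n G) (Phi_ob (wsrc a)) (Phi_ob (wtgt a))
       (fun i => (wel a i, wperm (wsrc a) i)).

(* A self-equivalence F of the groupoid K = coprod^n G (objects *_1..*_n, all
   morphisms endomorphisms (g, *_i)) is the same thing as a permutation sigma
   of the objects together with, for every i, an automorphism of G; a natural
   isomorphism between two such functors is a family (g_i) conjugating the
   automorphisms. *)
From Pilot Require Import Defs.
From mathcomp Require Import all_boot all_fingroup.
From Stdlib Require Import FunctionalExtensionality ClassicalEpsilon.
Set Implicit Arguments. Unset Strict Implicit. Unset Printing Implicit Defensive.

Section GroupFacts.
Variable G : grp.

Lemma grp_mulgV (x : G) : gmul x (ginv x) = gone G.
Proof.
set y := gmul x (ginv x).
have yy : gmul y y = y by rewrite /y -gmulA [gmul (ginv x) _]gmulA gmulVg gmul1g.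
by rewrite -[LHS]gmul1g -(gmulVg y) -gmulA yy gmulVg.
Qed.

Lemma grp_mulg1 (x : G) : gmul x (gone G) = x.
Proof. by rewrite -(gmulVg x) gmulA grp_mulgV gmul1g. Qed.

Lemma grp_mulKl (x y z : G) : gmul x y = gmul x z -> y = z.
Proof. by move=> H; rewrite -(gmul1g y) -(gmul1g z) -(gmulVg x) -!gmulA H. Qed.

Lemma grp_mulKr (x y z : G) : gmul y x = gmul z x -> y = z.
Proof. by move=> H; rewrite -(grp_mulg1 y) -(grp_mulg1 z) -(grp_mulgV x) !gmulA H. Qed.

(* c_g(x) g = g x: the defining relation of a morphism g : phi -> c_g o phi. *)
Lemma conjg_mul (g x : G) : gmul (Defs.conjg g x) g = gmul g x.
Proof. by rewrite /Defs.conjg -gmulA gmulVg grp_mulg1. Qed.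

Definition is_hom (phi : G -> G) := forall x y, phi (gmul x y) = gmul (phi x) (phi y).

Lemma hom1 (phi : G -> G) : is_hom phi -> phi (gone G) = gone G.
Proof. by move=> H; apply: (@grp_mulKr (phi (gone G))); rewrite -H !gmul1g. Qed.

Lemma hom_inv (phi psi : G -> G) :
  is_hom phi -> cancel phi psi -> cancel psi phi -> is_hom psi.
Proof. by move=> Hm K1 K2 x y; apply: (can_inj K1); rewrite Hm !K2. Qed.

Lemma aut_family_inv (I : Type) (phi : I -> G -> G) :
  (forall i, is_aut (phi i)) ->
  {psi : I -> G -> G | forall i, [/\ cancel (phi i) (psi i),
                                     cancel (psi i) (phi i) & is_aut (psi i)]}.
Proof.
move=> Hphi.
have inv i : exists psi, cancel (phi i) psi /\ cancel psi (phi i).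
  by case: (Hphi i) => _ [psi K1 K2]; exists psi.
exists (fun i => proj1_sig (constructive_indefinite_description _ (inv i))) => i.
case: constructive_indefinite_description => psi [K1 K2] /=.
split=> //; split; last by exists (phi i).
by apply: hom_inv K1 K2; case: (Hphi i).
Qed.

Lemma inj_surj_bij (f : G -> G) :
  injective f -> (forall y, exists x, f x = y) -> bijective f.
Proof.
move=> Hi Hs.
pose g y := proj1_sig (constructive_indefinite_description _ (Hs y)).
have K : cancel g f by move=> y; rewrite /g; case: constructive_indefinite_description.
by exists g => // x; apply: Hi; rewrite K.
Qed.

End GroupFacts.

Section Coproduct.
Variables (n : nat) (G : grp).
Local Notation K := (coprodG n G).

Lemma fdata_ext (F F' : fdata K) : fo F =1 fo F' -> fm F =1 fm F' -> F = F'.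
Proof.
case: F => o m; case: F' => o' m' /= Eo Em.
by rewrite (functional_extensionality _ _ Eo) (functional_extensionality _ _ Em).
Qed.

(* Every morphism of K is an endomorphism, so a natural transformation only
   relates functors that agree on objects. *)
Lemma nat_ob_eq (F F' : fdata K) eta : is_nat F F' eta -> fo F =1 fo F'.
Proof. by move=> [E _] i; have [<- <-] := E i. Qed.

Lemma functor_mo (F : fdata K) g i :
  is_functor F -> fm F (g, i) = ((fm F (g, i)).1, fo F i).
Proof. by case=> Hs _ _ _; rewrite -(Hs (g, i)); case: (fm F (g, i)). Qed.

Lemma functor_local_hom (F : fdata K) i :
  is_functor F -> is_hom (fun g => (fm F (g, i)).1).
Proof. by case=> _ _ _ Hc a b; rewrite (Hc (b, i) (a, i)). Qed.

Lemma equiv_ob_cancel (F F' : fdata K) eta :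
  is_nat (fid K) (fcomp F' F) eta -> cancel (fo F) (fo F').
Proof. by move=> Heta j; have := nat_ob_eq Heta j. Qed.

Lemma is_nat_fid : is_nat (fid K) (fid K) (fun i => (gone G, i)).
Proof. by split=> // -[g i] /=; rewrite grp_mulg1 gmul1g. Qed.

Lemma Phi_ob_functor (x : wob n G) : wob_ok x -> is_functor (Phi_ob x).
Proof.
move=> Hx; split=> //.
- by move=> i /=; rewrite hom1 //; case: (Hx i).
- by move=> [a i] [b j] /= ->; case: (Hx j) => Hm _; rewrite Hm.
Qed.

Lemma Phi_ob_tens (x x' : wob n G) :
  Phi_ob (WOb (wperm x' * wperm x)%g (fun i g => waut x (wperm x' i) (waut x' i g)))
  = fcomp (Phi_ob x) (Phi_ob x').
Proof. by apply: fdata_ext => [i|[g i]] /=; rewrite permM. Qed.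

Lemma Phi_ob_unit : Phi_ob (WOb 1%g (fun _ g => g)) = fid K.
Proof. by apply: fdata_ext => [i|[g i]] /=; rewrite perm1. Qed.

(* Phi(sigma, phi) is a self-equivalence, with quasi-inverse Phi(sigma^-1, phi^-1). *)
Lemma Phi_ob_ok (x : wob n G) : wob_ok x -> sym_ob_ok (Phi_ob x).
Proof.
move=> Hx; split; first exact: Phi_ob_functor.
have [psi Hpsi] := aut_family_inv Hx.
pose y := WOb (wperm x)^-1%g (fun i => psi ((wperm x)^-1%g i)).
have Hy : wob_ok y by move=> i; case: (Hpsi ((wperm x)^-1%g i)).
exists (Phi_ob y); split; first exact: Phi_ob_functor.
have yx : fcomp (Phi_ob y) (Phi_ob x) = fid K.
  rewrite -Phi_ob_tens -Phi_ob_unit; apply: fdata_ext => [i|[g i]] /=;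
    by rewrite mulgV // permK; case: (Hpsi i) => ->.
have xy : fcomp (Phi_ob x) (Phi_ob y) = fid K.
  rewrite -Phi_ob_tens -Phi_ob_unit; apply: fdata_ext => [i|[g i]] /=;
    by rewrite mulVg //; case: (Hpsi ((wperm x)^-1%g i)) => _ ->.
by exists (fun i => (gone G, i)), (fun i => (gone G, i)); rewrite yx xy; split;
  apply: is_nat_fid.
Qed.

Lemma Phi_ob_inj (x y : wob n G) : Phi_ob x = Phi_ob y -> x = y.
Proof.
case: x => p a; case: y => q b [] Ep Ea.
have -> : p = q by apply/permP => i; exact: (equal_f Ep i).
congr WOb; apply: functional_extensionality => i.
by apply: functional_extensionality => g; have [] := equal_f Ea (g, i).
Qed.

(* The local maps of a self-equivalence are bijective: injectivity comes from
   the unit F' F => id, surjectivity from the counit F F' => id. *)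
Lemma equiv_local_bij (F : fdata K) i :
  is_functor F -> is_equiv F -> bijective (fun g => (fm F (g, i)).1).
Proof.
move=> HF [F' [HF' [eta [eps [Heta Heps]]]]].
have K1 := equiv_ob_cancel Heta.
have [_ N1] := Heta; have [_ N2] := Heps.
apply: inj_surj_bij => [a b /= Hab|y].
  have := N1 (a, i); have := N1 (b, i) => /=.
  by rewrite functor_mo // -Hab -functor_mo // => -> [] /grp_mulKl.
(* F_i hits y at the preimage under F'_i of e y e^-1, e the counit at *_F(i). *)
pose e := (eps (fo F i)).1; pose h := gmul (gmul e y) (ginv e).
have [] := N2 (h, fo F i); rewrite /= -gmulA gmulVg grp_mulg1.
rewrite (functor_mo _ _ HF') K1 functor_mo //= => H _.
by exists (fm F' (h, fo F i)).1; apply: (@grp_mulKl _ e).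
Qed.

(* Every self-equivalence of K is Phi(sigma, phi) for its action sigma on
   objects and its local automorphisms phi_i. *)
Lemma Phi_ob_surj (F : fdata K) :
  sym_ob_ok F -> exists2 x, @wob_ok n G x & Phi_ob x = F.
Proof.
move=> [HF Heq].
have [F' [_ [eta [eps [Heta _]]]]] := Heq.
have K1 := equiv_ob_cancel Heta.
exists (WOb (perm (can_inj K1)) (fun i g => (fm F (g, i)).1)).
  by move=> i; split; [apply: functor_local_hom | apply: equiv_local_bij].
by apply: fdata_ext => [i|[g i]] /=; rewrite permE // [RHS]functor_mo.
Qed.

Lemma Phi_mo_ok (a : wmo n G) :
  tmo_ok (t := wreath n G) a -> tmo_ok (t := Symm K) (Phi_mo a).
Proof.
case: a => s t e [/= Hs Ht Hp Ha]; split; rewrite /=; try exact: Phi_ob_ok.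
by split=> [i|[g i]] /=; rewrite ?Hp // Ha conjg_mul.
Qed.

Lemma Phi_mo_inj (a b : wmo n G) : Phi_mo a = Phi_mo b -> a = b.
Proof.
case: a => s t e; case: b => s' t' e' H.
have /Phi_ob_inj <- : Phi_ob s = Phi_ob s' by apply: (f_equal (@nsrc _) H).
have /Phi_ob_inj <- : Phi_ob t = Phi_ob t' by apply: (f_equal (@ntgt _) H).
congr WMo; apply: functional_extensionality => i.
by have [] := equal_f (f_equal (@ncomp _) H) i.
Qed.

Lemma Phi_mo_surj (c : ntr K) :
  tmo_ok (t := Symm K) c -> exists2 a, tmo_ok (t := wreath n G) a & Phi_mo a = c.
Proof.
case: c => F F' eta [/= /Phi_ob_surj [x Hx <-] /Phi_ob_surj [y Hy <-] Heta].
have [E N] := Heta.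
exists (WMo x y (fun i => (eta i).1)).
  split=> //=; first by apply/permP; apply: (nat_ob_eq Heta).
  move=> i; apply: functional_extensionality => g.
  by apply: (@grp_mulKr _ (eta i).1); rewrite conjg_mul; have [] := N (g, i).
congr NTr; apply: functional_extensionality => i.
by have [/= <- _] := E i; case: (eta i).
Qed.

Lemma Phi_mo_tens (a a' : wmo n G) :
  tmo_ok (t := wreath n G) a' ->
  Phi_mo (ttens_mo (t := wreath n G) a a')
  = ttens_mo (t := Symm K) (Phi_mo a) (Phi_mo a').
Proof.
case: a' => s' t' e' [/= _ _ Hp' _].
rewrite /Phi_mo /= -!Phi_ob_tens; congr NTr.
by apply: functional_extensionality => i /=; rewrite permM Hp'.
Qed.

End Coproduct.

Theorem proposition4p13 (n : nat) (G : grp) (hn : 0 < n) :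
  @is_strict_iso (wreath n G) (Symm (coprodG n G)) (@Phi_ob n G) (@Phi_mo n G).
Proof.
split; first exact: Phi_ob_ok.
split; first exact: Phi_mo_ok.
do 3 (split; first by []).
split; first by move=> x y _ _; apply: Phi_ob_inj.
split; first exact: Phi_ob_surj.
split; first by move=> f g _ _; apply: Phi_mo_inj.
split; first exact: Phi_mo_surj.
split; first by move=> x y _ _; apply: Phi_ob_tens.
split; first by move=> f g _; apply: Phi_mo_tens.
exact: Phi_ob_unit.
Qed.
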